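(* Let $G$ be a gap-free simple graph and let $u$ be a minimal monomial generator of $I(G)^2$. Let $X_0$ be the set of variables $x_i$ with $x_i\in (I(G)^{(4)}:u)$ (possibly empty). Then $$\big(I(G)^{(4)}:u\big)+\big(I(G)^3:u\big)=\big(I(G)^3:u\big)+(X_0).$$
   Context: $S=\mathbb{K}[x_1,\dots,x_n]$ over a field $\mathbb{K}$; vertices of $G$ are the variables, edges identified with quadratic monomials. $I(G)$ is the edge ideal and $I(G)^{(s)}=\bigcap_{C\in\mathcal{C}(G)}\mathfrak{p}_C^s$, where $\mathcal{C}(G)$ is the set of minimal vertex covers and $\mathfrak{p}_C$ is generated by the variables in $C$. Two disjoint edges form a gap if the induced subgraph on their four endpoints has only these two edges; $G$ is gap-free if it has no gap. $(X_0)$ denotes the ideal generated by $X_0$ (the zero ideal if $X_0=\emptyset$). *)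

(* Monomial ideals of K[x_1..x_n] are represented by their
   sets of monomials (exponent vectors 'I_n -> nat). *)
From mathcomp Require Import all_boot.
Set Implicit Arguments. Unset Strict Implicit. Unset Printing Implicit Defensive.

Definition monom (n : nat) := 'I_n -> nat.

Definition mdvd n (a b : monom n) : Prop := forall i, a i <= b i.
Definition mmul n (a b : monom n) : monom n := fun i => a i + b i.
Definition var n (i : 'I_n) : monom n := fun j => (j == i) : nat.

Definition simple_graph n (e : rel 'I_n) : Prop :=
  symmetric e /\ irreflexive e.

Definition gap_free n (e : rel 'I_n) : Prop :=
  forall a b c d : 'I_n, e a b -> e c d ->
    a != c -> a != d -> b != c -> b != d ->
    [|| e a c, e a d, e b c | e b d].

Definition edges_prod n (es : seq ('I_n * 'I_n)) : monom n :=
  fun k => count (fun p => p.1 == k) es + count (fun p => p.2 == k) es.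

(* a monomial lies in I(G)^s iff it is divisible by a product of s edges *)
Definition in_edge_pow n (e : rel 'I_n) (s : nat) (m : monom n) : Prop :=
  exists es : seq ('I_n * 'I_n),
    size es = s /\ all (fun p => e p.1 p.2) es /\ mdvd (edges_prod es) m.

Definition vertex_cover n (e : rel 'I_n) (C : {set 'I_n}) : Prop :=
  forall i j, e i j -> (i \in C) || (j \in C).
Definition min_vertex_cover n (e : rel 'I_n) (C : {set 'I_n}) : Prop :=
  vertex_cover e C /\ forall D : {set 'I_n}, D \subset C -> vertex_cover e D -> D = C.

(* x^m in p_C^s iff total degree of m in the variables of C is >= s *)
Definition in_prime_pow n (C : {set 'I_n}) (s : nat) (m : monom n) : Prop :=
  s <= \sum_(i in C) m i.

(* symbolic power I(G)^(s) = intersection over minimal vertex covers *)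
Definition in_edge_sympow n (e : rel 'I_n) (s : nat) (m : monom n) : Prop :=
  forall C, min_vertex_cover e C -> in_prime_pow C s m.

Definition colon n (I : monom n -> Prop) (u : monom n) : monom n -> Prop :=
  fun m => I (mmul m u).

Definition min_mon_gen n (I : monom n -> Prop) (u : monom n) : Prop :=
  I u /\ forall v, mdvd v u -> I v -> v = u.

Definition in_var_ideal n (X : 'I_n -> Prop) (m : monom n) : Prop :=
  exists i, X i /\ 0 < m i.

From mathcomp Require Import all_boot zify.
From Stdlib Require Import Classical.
Set Implicit Arguments. Unset Strict Implicit.

(* Write u = x_a x_b x_c x_d with edges ab and cd, and let x^m u lie in I^(4)
   but not in I^3.  Then supp m is independent, since an edge inside it gives
   three edges dividing x^m u.  Every vertex x of u has a neighbour in supp m: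
   otherwise the zero set of m minus x is a vertex cover on which x^m u has
   degree at most 3.  If the ends of one edge of u had distinct neighbours in
   supp m (or a common one with m_i >= 2) we would again find three edges, so
   each edge of u has a unique neighbour i in supp m, and m_i = 1;
   gap-freeness forces both edges to share it.  Finally, given a vertex cover
   C, replacing the vertices of supp m other than i by their neighbours gives
   a cover on which x^m u has degree at most that of x_i u on C, hence
   x_i u lies in I^(4). *)

Section Monomials.
Variable n : nat.
Implicit Types (m w : monom n) (C D : {set 'I_n}) (i j k : 'I_n).

Lemma sum_mmul C m w :
  \sum_(k in C) mmul m w k = \sum_(k in C) m k + \sum_(k in C) w k.
Proof. exact: big_split. Qed.

Lemma sum_var C i : \sum_(k in C) var i k = (i \in C).
Proof.
have [iC|iNC] := boolP (i \in C).
  by rewrite (bigD1 i) //= /var eqxx big1 // => k /andP[_ /negbTE ->].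
by rewrite big1 // => k kC; rewrite /var; case: eqP kC iNC => // -> ->.
Qed.

Lemma sum_count_mem C (s : seq 'I_n) : \sum_(k in C) count_mem k s = count [in C] s.
Proof.
elim: s => [|x s IH] /=; first by rewrite big1.
rewrite big_split /= IH -(sum_var C x); congr (_ + _).
by apply: eq_bigr => k _; rewrite /var eq_sym.
Qed.

Definition endpoints (es : seq ('I_n * 'I_n)) := flatten [seq [:: p.1; p.2] | p <- es].

Lemma edges_prodE es k : edges_prod es k = count_mem k (endpoints es).
Proof.
rewrite /edges_prod; elim: es => //= p es IH.
by rewrite addnACA IH addnA.
Qed.

Lemma leq_sum_subset C D (f : 'I_n -> nat) :
  D \subset C -> \sum_(k in D) f k <= \sum_(k in C) f k.
Proof. by move=> DC; rewrite [X in _ <= X](big_setID D) /= (setIidPr DC) leq_addr. Qed.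

Lemma mdvd_mmul2r m w1 w2 : mdvd w1 w2 -> mdvd (mmul w1 m) (mmul w2 m).
Proof. by move=> le12 k; rewrite leq_add2r. Qed.

Lemma mdvd_var m i : 0 < m i -> mdvd (var i) m.
Proof. by move=> mi k; rewrite /var; case: eqP => // ->. Qed.

Lemma mdvd_var2 m i j :
  i != j -> 0 < m i -> 0 < m j -> mdvd (mmul (var i) (var j)) m.
Proof.
move=> ij mi mj k; rewrite /mmul /var.
case: (k =P i) (k =P j) => [->|_] [kj|_] //=; first by rewrite kj eqxx in ij.
by rewrite kj.
Qed.

Lemma mdvd_var_sq m i : 1 < m i -> mdvd (mmul (var i) (var i)) m.
Proof. by move=> mi k; rewrite /mmul /var; case: eqP => [->|]. Qed.

End Monomials.

Section EdgeIdeals.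
Variables (n : nat) (e : rel 'I_n).
Implicit Types (m w : monom n) (C D : {set 'I_n}) (i j k : 'I_n).

Lemma vertex_coverP C :
  reflect (vertex_cover e C) [forall i, forall j, e i j ==> (i \in C) || (j \in C)].
Proof.
apply: (iffP forallP) => [cov i j eij | cov i].
  by move/forallP/(_ j): (cov i); rewrite eij.
by apply/forallP => j; apply/implyP; apply: cov.
Qed.

Lemma vertex_cover_min C :
  vertex_cover e C -> exists2 D : {set 'I_n}, D \subset C & min_vertex_cover e D.
Proof.
move/vertex_coverP.
case/(minset_exists (P := fun D => [forall i, forall j, e i j ==> (i \in D) || (j \in D)])).
move=> D /minsetP[/vertex_coverP covD minD] DC; exists D => //; split => //.
by move=> D' D'D /vertex_coverP covD'; apply: minD.
Qed.

Lemma in_edge_sympow_cover s w C :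
  in_edge_sympow e s w -> vertex_cover e C -> in_prime_pow C s w.
Proof.
move=> sym /vertex_cover_min[D DC minD].
exact: leq_trans (sym D minD) (leq_sum_subset _ DC).
Qed.

Lemma in_edge_sympow_mono s w1 w2 :
  mdvd w1 w2 -> in_edge_sympow e s w1 -> in_edge_sympow e s w2.
Proof. by move=> le12 sym C /sym /leq_trans; apply; apply: leq_sum. Qed.

Lemma min_mon_gen_edge_pow s u :
  min_mon_gen (in_edge_pow e s) u ->
  exists es, [/\ size es = s, all (fun p => e p.1 p.2) es & u = edges_prod es].
Proof.
case=> -[es [size_es [edges_es es_u]]] minu; exists es; split => //.
by symmetry; apply: minu => //; exists es; split => //; split => // k.
Qed.

Lemma in_edge_pow3_edge m k l a b c d :
  e k l -> e a b -> e c d -> mdvd (mmul (var k) (var l)) m ->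
  in_edge_pow e 3 (mmul m (edges_prod [:: (a, b); (c, d)])).
Proof.
move=> ekl eab ecd klm; exists [:: (k, l); (a, b); (c, d)].
split=> //; split=> [|x]; first by rewrite /= ekl eab ecd.
rewrite /mmul !edges_prodE [endpoints (_ :: _)]/= count_cat leq_add2r.
by have := klm x; rewrite /mmul /var /= addn0 !(eq_sym _ x).
Qed.

Lemma in_edge_pow3_perm m i j x y z t a b c d :
  e x i -> e y j -> e z t -> mdvd (mmul (var i) (var j)) m ->
  perm_eq [:: x; y; z; t] [:: a; b; c; d] ->
  in_edge_pow e 3 (mmul m (edges_prod [:: (a, b); (c, d)])).
Proof.
move=> exi eyj ezt ijm /permP slots; exists [:: (x, i); (y, j); (z, t)].
split=> //; split=> [|k]; first by rewrite /= exi eyj ezt.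
have /permP regroup : perm_eq [:: x; i; y; j; z; t] ([:: i; j] ++ [:: x; y; z; t]).
  by rewrite (perm_catCA [:: x] [:: i]) perm_cons (perm_catCA [:: x; y] [:: j]).
rewrite /mmul !edges_prodE regroup count_cat slots leq_add2r.
by have := ijm k; rewrite /mmul /var /= addn0 !(eq_sym _ k).
Qed.

Lemma in_edge_sympow_mul_var s m w i :
  symmetric e -> (forall k l, 0 < m k -> 0 < m l -> ~~ e k l) -> m i = 1 ->
  (forall x, 0 < w x -> m x = 0 /\ forall j, 0 < m j -> e x j -> j = i) ->
  in_edge_sympow e s (mmul m w) -> in_edge_sympow e s (mmul (var i) w).
Proof.
move=> e_sym indep mi1 w_nbr sym C [coverC _].
pose Cs := [set k | ((k \in C) && ((m k == 0) || (k == i)))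
                    || [exists j, [&& 0 < m j, j != i & e j k]]].
have coverCs : vertex_cover e Cs.
  have half k l : e k l -> k \in C -> (k \in Cs) || (l \in Cs).
    move=> ekl kC; rewrite !inE kC /=.
    have [//|] := boolP ((m k == 0) || (k == i)); rewrite negb_or -lt0n => /andP[mk ki].
    rewrite orbC; apply/orP; left; apply/orP; right.
    by apply/existsP; exists k; rewrite mk ki.
  move=> k l ekl; have /orP[kC|lC] := coverC k l ekl; first exact: half.
  by rewrite orbC; apply: half lC; rewrite e_sym.
have iCs : (i \in Cs) = (i \in C).
  rewrite !inE eqxx orbT andbT; have [//|_] := boolP (i \in C).
  apply/existsP => -[j /and3P[mj _ eji]].
  by move: (indep j i mj); rewrite mi1 eji => /(_ isT).
have m_le k : k \in Cs -> m k <= var i k.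
  rewrite /var; have [->|ki] := eqVneq k i; first by rewrite mi1.
  rewrite !inE (negbTE ki) orbF => /orP[/andP[_ /eqP ->] //|/existsP[j /and3P[mj _ ejk]]].
  by apply: contraTT ejk; rewrite -ltnNge; apply: indep.
have w_mem k : 0 < w k -> (k \in Cs) = (k \in C).
  move=> /w_nbr[mk0 nbr]; rewrite !inE mk0 eqxx /=.
  have [//|_] := boolP (k \in C); apply/existsP => -[j /and3P[mj ji ejk]].
  by rewrite (nbr j mj) ?eqxx // e_sym in ji.
have := in_edge_sympow_cover sym coverCs; rewrite /in_prime_pow !sum_mmul sum_var -iCs.
move/leq_trans; apply; apply: leq_add; rewrite -?sum_var; first exact: leq_sum.
rewrite [X in _ <= X]big_mkcond [X in X <= _]big_mkcond /=; apply: leq_sum => k _.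
by have [->|/w_mem ->] := posnP (w k); case: ifP.
Qed.

End EdgeIdeals.

Section TwoEdges.
Variables (n : nat) (e : rel 'I_n) (m : monom n) (a b c d : 'I_n).
Hypotheses (e_sym : symmetric e) (e_irr : irreflexive e) (eab : e a b) (ecd : e c d).
Local Notation u := (edges_prod [:: (a, b); (c, d)]).
Hypothesis sym4 : in_edge_sympow e 4 (mmul m u).
Hypothesis not3 : ~ in_edge_pow e 3 (mmul m u).

Lemma supp_independent k l : 0 < m k -> 0 < m l -> ~~ e k l.
Proof.
move=> mk ml; apply/negP => ekl; apply: not3.
have kl : k != l by apply: contraTneq ekl => ->; rewrite e_irr.
exact: in_edge_pow3_edge ekl eab ecd (mdvd_var2 kl mk ml).
Qed.

Lemma u_vertex_supp_nbr x : x \in [:: a; b; c; d] -> exists2 j, 0 < m j & e x j.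
Proof.
move=> x_u; apply/exists_inP; apply: contraT.
rewrite negb_exists_in => /forall_inP nbr0.
pose C0 := [set k | (m k == 0) && (k != x)].
have coverC0 : vertex_cover e C0.
  move=> k l ekl; apply: contraT; rewrite !inE negb_or !negb_and !negbK -!lt0n.
  case/andP => /orP[mk|/eqP kx] /orP[ml|/eqP lx]; subst.
  - by rewrite (negbTE (supp_independent mk ml)) in ekl.
  - by move: (nbr0 k mk); rewrite e_sym ekl.
  - by move: (nbr0 l ml); rewrite ekl.
  - by rewrite e_irr in ekl.
have := in_edge_sympow_cover sym4 coverC0; rewrite /in_prime_pow sum_mmul big1 => [|k].
  under eq_bigr do rewrite edges_prodE; rewrite add0n sum_count_mem /=.
  have xC0 : (x \in C0) = false by rewrite inE eqxx andbF.
  by rewrite !inE in x_u; case/or4P: x_u => /eqP xE; rewrite -xE xC0; lia.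
by rewrite inE => /andP[/eqP].
Qed.

Lemma u_vertex_not_supp x : x \in [:: a; b; c; d] -> m x = 0.
Proof.
case/u_vertex_supp_nbr=> j mj exj; apply/eqP; rewrite -leqn0 leqNgt.
by apply: contraL exj => mx; apply: supp_independent.
Qed.

Lemma u_edge_supp_nbr_unique x y z t :
  e x y -> e z t -> perm_eq [:: x; y; z; t] [:: a; b; c; d] ->
  exists i, [/\ m i = 1, e x i, e y i & forall j, 0 < m j -> e x j || e y j -> j = i].
Proof.
move=> exy ezt slots.
have [i mi exi] : exists2 i, 0 < m i & e x i.
  by apply: u_vertex_supp_nbr; rewrite -(perm_mem slots) inE eqxx.
have [j mj eyj] : exists2 j, 0 < m j & e y j.
  by apply: u_vertex_supp_nbr; rewrite -(perm_mem slots) !inE eqxx orbT.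
have no_pair p q : e x p -> e y q -> ~ mdvd (mmul (var p) (var q)) m.
  by move=> exp eyq pq; apply: not3; apply: in_edge_pow3_perm exp eyq ezt pq slots.
have y_nbr k : 0 < m k -> e y k -> k = i.
  move=> mk eyk; have [-> //|ki] := eqVneq k i; exfalso.
  by apply: (no_pair i k) => //; apply: mdvd_var2; rewrite // eq_sym.
have eyi : e y i by rewrite -(y_nbr j mj eyj).
have x_nbr k : 0 < m k -> e x k -> k = i.
  move=> mk exk; have [-> //|ki] := eqVneq k i; exfalso.
  by apply: (no_pair k i) => //; apply: mdvd_var2.
have mi1 : m i = 1.
  apply/eqP; rewrite eqn_leq mi andbT leqNgt; apply/negP => /mdvd_var_sq.
  exact: no_pair.
by exists i; split => // k mk /orP[]; [apply: x_nbr | apply: y_nbr].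
Qed.

Lemma no_cross_edge i k :
  e a i -> e b i -> e c k -> e d k -> mdvd (mmul (var i) (var k)) m ->
  ~~ [|| e a c, e a d, e b c | e b d].
Proof.
move=> eai ebi eck edk ikm; apply/negP; case/or4P => [eac|ead|ebc|ebd]; apply: not3.
- apply: (in_edge_pow3_perm ebi edk eac ikm).
  by rewrite (perm_catCA [:: b; d] [:: a]) !perm_cons (perm_catC [:: d]).
- by apply: (in_edge_pow3_perm ebi eck ead ikm); rewrite (perm_catCA [:: b; c] [:: a]).
- by apply: (in_edge_pow3_perm eai edk ebc ikm); rewrite perm_cons (perm_catC [:: d]).
- apply: (in_edge_pow3_perm eai eck ebd ikm).
  by rewrite perm_cons (perm_catCA [:: c] [:: b]).
Qed.

Lemma gap_free_sympow4_var :
  gap_free e -> exists2 i, 0 < m i & in_edge_sympow e 4 (mmul (var i) u).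
Proof.
move=> gap.
have [i [mi1 eai ebi ab_nbr]] := u_edge_supp_nbr_unique eab ecd (perm_refl _).
have [k [mk1 eck edk cd_nbr]] : exists k, [/\ m k = 1, e c k, e d k &
    forall j, 0 < m j -> e c j || e d j -> j = k].
  by apply: (u_edge_supp_nbr_unique ecd eab); rewrite (perm_catC [:: c; d]).
have ki : k = i.
  have [-> //|ki] := eqVneq k i; exfalso.
  have off_ab x : e x k -> (a != x) && (b != x).
    by move=> exk; apply/andP; split; apply: contra ki => /eqP xE; apply/eqP;
      apply: ab_nbr; rewrite ?mk1 // xE exk ?orbT.
  have /andP[ac bc] := off_ab c eck; have /andP[ad bd] := off_ab d edk.
  have ikm : mdvd (mmul (var i) (var k)) m.
    by apply: mdvd_var2; rewrite ?mi1 ?mk1 // eq_sym.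
  by move: (no_cross_edge eai ebi eck edk ikm); rewrite (gap a b c d eab ecd ac ad bc bd).
subst k; exists i; first by rewrite mi1.
apply: (in_edge_sympow_mul_var e_sym supp_independent mi1) sym4 => x ux.
have x_u : x \in [:: a; b; c; d].
  by move: ux; rewrite edges_prodE -has_count has_pred1.
split; first exact: u_vertex_not_supp.
move=> j mj exj; rewrite !inE in x_u.
by case/or4P: x_u => /eqP xE; subst x;
  [apply: ab_nbr | apply: ab_nbr | apply: cd_nbr | apply: cd_nbr]; rewrite ?exj ?orbT.
Qed.

End TwoEdges.

Theorem lemma4p1 (n : nat) (e : rel 'I_n) (u : monom n) :
  simple_graph e -> gap_free e ->
  min_mon_gen (in_edge_pow e 2) u ->
  let X0 := fun i : 'I_n => colon (in_edge_sympow e 4) u (var i) in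
  forall m : monom n,
    (colon (in_edge_sympow e 4) u m \/ colon (in_edge_pow e 3) u m) <->
    (colon (in_edge_pow e 3) u m \/ in_var_ideal X0 m).
Proof.
move=> [e_sym e_irr] gap /min_mon_gen_edge_pow[es [size_es edges_es ->]].
case: es size_es edges_es => [|[a b] [|[c d] []]] //= _ /and3P[eab ecd _] m; split.
- case=> [sym4|]; last by left.
  have [|not3] := classic (colon (in_edge_pow e 3) (edges_prod [:: (a, b); (c, d)]) m).
    by left.
  have [i mi symi] := gap_free_sympow4_var e_sym e_irr eab ecd sym4 not3 gap.
  by right; exists i.
- case=> [|[i [X0i mi]]]; first by right.
  by left; apply: in_edge_sympow_mono X0i; exact/mdvd_mmul2r/mdvd_var.
Qed.
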